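(* In the contention game with $k=2$ channels under acknowledgement-based feedback and $n\ge5$ players, the anonymous protocol $f^2$ (in every slot, regardless of history, a pending player transmits on each of the two channels with probability $1/2$ and never stays idle) is not an equilibrium protocol. In fact, when all other players use $f^2$, the protocol that does not transmit at $t=1$ and then follows $f^2$ gives any player strictly smaller expected latency than $f^2$.
   Context: Contention game: $n$ players, channels $K=\{1,\dots,k\}$, slots $t=1,2,\dots$; each player has one packet and is initially pending. In each slot a pending player chooses (possibly at random) an action in $\{0,1,\dots,k\}$ ($0$ = idle, $a$ = transmit on channel $a$). A lone transmitter on a channel succeeds and leaves; two or more transmitters on a channel collide and remain pending. Latency = slot of a player's successful transmission; players minimize expected latency. Acknowledgement-based feedback: only a player who attempted transmission learns whether she succeeded; decision rules depend only on the personal action history. An anonymous protocol is an equilibrium protocol if, when all players use it, no player at any slot and after any history can decrease her conditional expected latency by unilaterally deviating. *)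

From HB Require Import structures.
From mathcomp Require Import all_boot all_order all_algebra.
From mathcomp Require Import all_classical all_reals.
From mathcomp Require Import ereal sequences.
Set Implicit Arguments. Unset Strict Implicit. Unset Printing Implicit Defensive.
Import Order.TTheory GRing.Theory Num.Theory.
Local Open Scope ring_scope.

(** Actions: [0] = idle, [a] (1 <= a <= k) = transmit on channel [a]. *)
Definition action (k : nat) := 'I_k.+1.
Definition idle {k : nat} : action k := ord0.

(** Under acknowledgement-based feedback, every past transmission of a still
    pending player failed, so the action sequence is her whole information. *)
Definition history (k : nat) := seq (action k).

Definition protocol (R : realType) (k : nat) := history k -> {ffun action k -> R}.

Definition valid_protocol (R : realType) (k : nat) (p : protocol R k) : Prop :=
  forall h, (forall a, 0 <= p h a) /\ \sum_(a : action k) p h a = 1.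

(** Configuration of the system at the beginning of a slot:
    [Some h] = pending with history [h], [None] = already succeeded. *)
Definition config (n k : nat) := 'I_n -> option (history k).

Definition init_config (n k : nat) : config n k := fun _ => Some [::].

Definition profile (R : realType) (n k : nat) := 'I_n -> protocol R k.

Definition joint_weight (R : realType) (n k : nat) (P : profile R n k)
  (c : config n k) (a : {ffun 'I_n -> action k}) : R :=
  \prod_(i : 'I_n)
     match c i with
     | Some h => P i h (a i)
     | None => (a i == idle)%:R
     end.

Definition next_config (n k : nat) (c : config n k) (a : {ffun 'I_n -> action k})
  : config n k :=
  fun i =>
    match c i with
    | None => None
    | Some h =>
        if (a i != idle) &&
           [forall j : 'I_n, (j != i) ==> (c j != None) ==> (a j != a i)]
        then None
        else Some (rcons h (a i))
    end.

(** Finitely supported distributions over configurations (weighted list). *)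
Definition cdist (R : realType) (n k : nat) := seq (R * config n k).

Definition step (R : realType) (n k : nat) (P : profile R n k)
  (d : cdist R n k) : cdist R n k :=
  flatten [seq [seq (x.1 * joint_weight P x.2 a, next_config x.2 a)
               | a <- enum {: {ffun 'I_n -> action k}}] | x <- d].

Definition dist_at (R : realType) (n k : nat) (P : profile R n k) (t : nat)
  : cdist R n k := iter t (step P) [:: (1, @init_config n k)].

Definition pend_prob (R : realType) (n k : nat) (P : profile R n k) (t : nat)
  (i : 'I_n) (Q : pred (history k)) : R :=
  \sum_(x <- dist_at P t)
     match x.2 i with Some h => if Q h then x.1 else 0 | None => 0 end.

(** Expected latency of player [i]:  E[L] = sum_{t >= 0} P(L > t),
    and L > t iff the player is still pending after [t] slots. *)
Definition exp_latency (R : realType) (n k : nat) (P : profile R n k)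
  (i : 'I_n) : \bar R :=
  (\sum_(t <oo) (pend_prob P t i predT)%:E)%E.

Definition deviate (R : realType) (n k : nat) (f g : protocol R k) (i : 'I_n)
  : profile R n k := fun j => if j == i then g else f.

Definition all_use (R : realType) (n k : nat) (f : protocol R k) : profile R n k :=
  fun _ => f.

(** Probability that player [i] is pending at slot [size h + 1] with
    history exactly [h]. *)
Definition hist_prob (R : realType) (n k : nat) (P : profile R n k)
  (i : 'I_n) (h : history k) : R :=
  pend_prob P (size h) i (fun h' => h' == h).

(** Conditional expected latency of player [i] given that she is pending at
    slot [size h + 1] with history [h]:
      E[L | A_h] = (sum_{t>=0} P(L > t /\ A_h)) / P(A_h),
    where for t >= size h, (L > t /\ A_h) means pending after t slots with a
    history starting with h, and for t < size h it is just A_h. *)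
Definition cond_latency (R : realType) (n k : nat) (P : profile R n k)
  (i : 'I_n) (h : history k) : \bar R :=
  ((\sum_(t <oo)
      (pend_prob P (maxn t (size h)) i (fun h' => take (size h) h' == h))%:E)
   * ((hist_prob P i h)^-1)%:E)%E.

Definition switch_at (R : realType) (k : nat) (f g : protocol R k) (s : nat)
  : protocol R k := fun h' => if (size h' < s)%N then f h' else g h'.

Definition equilibrium (R : realType) (n k : nat) (f : protocol R k) : Prop :=
  forall (i : 'I_n) (h : history k) (g : protocol R k),
    valid_protocol g ->
    0 < hist_prob (@all_use R n k f) i h ->
    (cond_latency (@all_use R n k f) i h
       <= cond_latency (deviate f (switch_at f g (size h)) i) i h)%E.

Definition f2 (R : realType) : protocol R 2 :=
  fun _ => [ffun a : action 2 => if a == idle then 0 else 2^-1].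

Definition f2_idle_first (R : realType) : protocol R 2 :=
  fun h => if h is [::] then [ffun a : action 2 => (a == idle)%:R] else f2 R h.

From mathcomp Require Import all_boot all_order all_algebra.
From mathcomp Require Import all_classical all_reals.
From mathcomp Require Import ereal sequences normedtype.
From mathcomp Require Import ring lra.
Import Order.TTheory GRing.Theory Num.Theory.
Local Open Scope ring_scope.
Set Implicit Arguments. Unset Strict Implicit. Unset Printing Implicit Defensive.

(* Let [V m = 2^m / m] for [m >= 2] and [V 1 = 1].  When [m] players are
   pending and all use [f2], each of them succeeds with probability [2^(1-m)]
   and, for [m > 2], at most one does.  This first-step analysis shows that [V]
   of the number of pending players is a potential whose expectation drops by
   exactly [1] in every slot in which a given player is pending, so her
   expected latency under [f2] is [V n].  If instead she idles in slot 1, the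
   [n - 1 >= 4] others transmit, each succeeds with probability [2^(2-n)] and at
   most one does, so her expected latency is at most
   [1 + V n - (n-1) 2^(2-n) (V n - V (n-1)) = V n + 1 - (2n - 4)/n < V n].
   Her history at slot 1 is certain, so there the conditional latency is the
   latency itself, and [f2] is not an equilibrium. *)

Section Expectation.
Variables (R : realType) (n k : nat).
Implicit Types (P : profile R n k) (d : cdist R n k) (F G W : config n k -> R).

Definition expect d F : R := \sum_(x <- d) x.1 * F x.2.

Definition transfer P F (c : config n k) : R :=
  \sum_(a : {ffun 'I_n -> action k}) joint_weight P c a * F (next_config c a).

Definition pending (i : 'I_n) (c : config n k) : R := (c i != None)%:R.

Definition latency_potential P (i : 'I_n) W :=
  forall c, transfer P W c = W c - pending i c.

Lemma expect_step P d F : expect (step P d) F = expect d (transfer P F).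
Proof.
rewrite /expect /step big_flatten /= big_map; apply: eq_bigr => x _.
rewrite big_map big_enum /= /transfer mulr_sumr; apply: eq_bigr => a _.
by rewrite mulrA.
Qed.

Lemma expectB d F G : expect d (F \- G) = expect d F - expect d G.
Proof. by rewrite /expect -sumrB; apply: eq_bigr => x _; rewrite mulrBr. Qed.

Lemma expectZ d F (r : R) : expect d (fun c => r * F c) = r * expect d F.
Proof. by rewrite /expect mulr_sumr; apply: eq_bigr => x _; rewrite mulrCA. Qed.

Lemma pend_prob_expect P t i : pend_prob P t i predT = expect (dist_at P t) (pending i).
Proof.
rewrite /pend_prob /expect; apply: eq_bigr => x _.
by rewrite /pending; case: (x.2 i) => [h|] /=; rewrite ?mulr1 ?mulr0.
Qed.

Lemma expect_potential P i W : latency_potential P i W -> forall t,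
  expect (dist_at P t) W = W (@init_config n k) - \sum_(s < t) pend_prob P s i predT.
Proof.
move=> HW; elim=> [|t IH].
  by rewrite big_ord0 subr0 /expect big_cons big_nil addr0 mul1r.
rewrite big_ord_recr /= expect_step.
have -> : expect (dist_at P t) (transfer P W) = expect (dist_at P t) (W \- pending i).
  by apply: eq_bigr => x _; rewrite HW.
by rewrite expectB IH pend_prob_expect opprD addrA.
Qed.

Definition nonneg_profile P := forall j h a, 0 <= P j h a.

Section NonnegProfile.
Variable P : profile R n k.
Hypothesis P_ge0 : nonneg_profile P.

Lemma joint_weight_ge0 c a : 0 <= joint_weight P c a.
Proof.
by apply: prodr_ge0 => j _; case: (c j) => [h|] //=; rewrite ler0n.
Qed.

Lemma dist_at_ge0 t x : x \in dist_at P t -> 0 <= x.1.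
Proof.
elim: t x => [|t IH] x; first by rewrite inE => /eqP ->; exact: ler01.
case/flattenP => s /mapP [y ym ->] /mapP [a _ ->] /=.
by rewrite mulr_ge0 ?joint_weight_ge0 ?IH.
Qed.

Lemma expect_ge0 t F : (forall c, 0 <= F c) -> 0 <= expect (dist_at P t) F.
Proof.
move=> F_ge0; rewrite /expect big_seq; apply: sumr_ge0 => x xP.
by rewrite mulr_ge0 ?F_ge0 ?(dist_at_ge0 xP).
Qed.

Lemma ler_expect t F G : (forall c, F c <= G c) ->
  expect (dist_at P t) F <= expect (dist_at P t) G.
Proof.
move=> FG; rewrite /expect big_seq [leRHS]big_seq; apply: ler_sum => x xP.
by rewrite ler_wpM2l ?FG ?(dist_at_ge0 xP).
Qed.

Lemma pend_prob_ge0 t i : 0 <= pend_prob P t i predT.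
Proof. by rewrite pend_prob_expect expect_ge0 // => c; rewrite ler0n. Qed.

End NonnegProfile.
End Expectation.

Arguments pending {R n k} i c.

Section Protocols.
Variables (R : realType) (n k : nat).

Lemma valid_nonneg_all_use (f : protocol R k) :
  valid_protocol f -> nonneg_profile (@all_use R n k f).
Proof. by move=> f_valid j h a; case: (f_valid h) => /(_ a). Qed.

Lemma valid_nonneg_deviate (f g : protocol R k) (i : 'I_n) :
  valid_protocol f -> valid_protocol g -> nonneg_profile (deviate f g i).
Proof.
by move=> f_valid g_valid j h a; rewrite /deviate; case: eqP => _;
  [case: (g_valid h) | case: (f_valid h)] => /(_ a).
Qed.

Lemma switch_at0 (f g : protocol R k) : switch_at f g 0 = g.
Proof. exact: boolp.funext. Qed.

Lemma hist_prob_nil (P : profile R n k) i : hist_prob P i [::] = 1.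
Proof. by rewrite /hist_prob /pend_prob big_cons big_nil /= addr0. Qed.

Lemma cond_latency_nil (P : profile R n k) i : cond_latency P i [::] = exp_latency P i.
Proof.
rewrite /cond_latency hist_prob_nil invr1 mule1; apply: eq_eseriesr => t _.
rewrite maxn0 /pend_prob; congr (_%:E); apply: eq_bigr => x _.
by case: (x.2 i) => // h; rewrite take0 eqxx.
Qed.

End Protocols.

Lemma partial_sum_le_nneseries (R : realType) (u : nat -> R) t :
  (forall s, 0 <= u s) -> ((\sum_(s < t) u s)%:E <= \sum_(s <oo) (u s)%:E)%E.
Proof.
move=> u_ge0; rewrite -sumEFin -(big_mkord xpredT (fun s => (u s)%:E)).
by apply: nneseries_lim_ge => s _ _; rewrite lee_fin.
Qed.

Lemma nneseries_le_bound (R : realType) (u : nat -> R) (B : R) :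
  (forall s, 0 <= u s) -> (forall t, \sum_(s < t) u s <= B) ->
  (\sum_(s <oo) (u s)%:E <= B%:E)%E.
Proof.
move=> u_ge0 uB; apply: lime_le.
  by apply: is_cvg_nneseries => s _ _; rewrite lee_fin.
by apply: nearW => t; rewrite /= big_mkord sumEFin lee_fin.
Qed.

Section LatencyFromPotential.
Variables (R : realType) (n k : nat) (P : profile R n k) (i : 'I_n).
Variable W : config n k -> R.
Hypotheses (P_ge0 : nonneg_profile P) (W_potential : latency_potential P i W).

Let W0 := W (@init_config n k).
Let S t := \sum_(s < t) pend_prob P s i predT.

Lemma exp_latency_le_potential : (forall c, 0 <= W c) -> (exp_latency P i <= W0%:E)%E.
Proof.
move=> W_ge0; apply: nneseries_le_bound => [s|t]; first exact: pend_prob_ge0.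
have := expect_potential W_potential t; have := expect_ge0 P_ge0 t W_ge0.
rewrite -/W0; lra.
Qed.

(* While [i] is pending the expected potential stays above [W0 - x], so if the
   partial sums stayed below [x] every slot would contribute at least
   [(W0 - x) / C] to them. *)
Lemma partial_latency_gt (C x : R) : 0 <= C -> (forall c, W c <= C * pending i c) ->
  x < W0 -> exists t, x < S t.
Proof.
move=> C_ge0 W_le x_lt; have [x_lt0|x_ge0] := ltP x 0.
  by exists 0%N; rewrite /S big_ord0.
case: (pselect (exists t, x < S t)) => // S_small.
have S_le t : S t <= x by rewrite leNgt; apply/negP => ?; apply: S_small; exists t.
have d_gt0 : 0 < W0 - x by rewrite subr_gt0.
have slot_ge t : W0 - x <= C * pend_prob P t i predT.
  rewrite pend_prob_expect -expectZ; apply: le_trans (ler_expect P_ge0 t W_le).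
  by rewrite (expect_potential W_potential); have := S_le t; rewrite /S -/W0; lra.
have sum_ge t : t%:R * (W0 - x) <= C * x.
  apply: le_trans (ler_wpM2l C_ge0 (S_le t)).
  have -> : t%:R * (W0 - x) = \sum_(s < t) (W0 - x).
    by rewrite sumr_const card_ord mulr_natl.
  by rewrite /S mulr_sumr; apply: ler_sum => s _; exact: slot_ge.
have := archi_boundP (divr_ge0 (mulr_ge0 C_ge0 x_ge0) (ltW d_gt0)).
by rewrite ltr_pdivrMr // ltNge sum_ge.
Qed.

Lemma exp_latency_potential (C : R) : 0 <= C ->
  (forall c, 0 <= W c) -> (forall c, W c <= C * pending i c) ->
  exp_latency P i = W0%:E.
Proof.
move=> C_ge0 W_ge0 W_le; apply/eqP; rewrite eq_le exp_latency_le_potential //=.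
have S_le t : ((S t)%:E <= exp_latency P i)%E.
  by apply: partial_sum_le_nneseries => s; exact: pend_prob_ge0.
rewrite leNgt; apply/negP; move: (S_le 0%N); rewrite /S big_ord0.
case: (exp_latency P i) S_le => [x| |] // S_le _; rewrite lte_fin => x_lt.
have [t] := partial_latency_gt C_ge0 W_le x_lt.
by rewrite ltNge -lee_fin S_le.
Qed.

End LatencyFromPotential.

Section Departures.
Variables (n k : nat).
Implicit Types (c : config n k) (a : {ffun 'I_n -> action k}).

Definition succeeds c a (j : 'I_n) : bool :=
  [&& c j != None, a j != idle &
      [forall l, (l != j) ==> (c l != None) ==> (a l != a j)]].

Lemma next_config_nonempty c a j : next_config c a j != Some [::].
Proof.
rewrite /next_config; case: (c j) => [h|] //; case: ifP => // _.
by apply/eqP => -[] /eqP; rewrite -size_eq0 size_rcons.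
Qed.

Definition num_pending c : nat := #|[pred j | c j != None]|.

Lemma succeeds_pending c a j : succeeds c a j -> c j != None.
Proof. by case/and3P. Qed.

Lemma succeeds_transmits c a j : succeeds c a j -> a j != idle.
Proof. by case/and3P. Qed.

Lemma succeeds_alone c a j l : succeeds c a j -> l != j -> c l != None -> a l != a j.
Proof. by case/and3P => _ _ /forallP /(_ l) + lj cl; rewrite lj cl. Qed.

Lemma collision_witness c a j : c j != None -> a j != idle -> ~~ succeeds c a j ->
  exists l, [&& l != j, c l != None & a l == a j].
Proof.
move=> cj aj; rewrite /succeeds cj aj /= => /forallPn [l H].
by exists l; move: H; case: (l != j); case: (c l != None); case: (a l == a j).
Qed.

Lemma next_config_pending c a j :
  (next_config c a j != None) = (c j != None) && ~~ succeeds c a j.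
Proof. by rewrite /next_config /succeeds; case: (c j) => [h|] //=; case: ifP. Qed.

Lemma num_pending_next c a :
  num_pending (next_config c a) = (num_pending c - #|[pred j | succeeds c a j]|)%N.
Proof.
rewrite /num_pending -(cardID [pred j | succeeds c a j] [pred j | c j != None]).
have -> : #|[predI [pred j | c j != None] & [pred j | succeeds c a j]]| =
          #|[pred j | succeeds c a j]|.
  by apply: eq_card => j; rewrite !inE andb_idl // => /succeeds_pending.
by rewrite addKn; apply: eq_card => j; rewrite !inE next_config_pending andbC.
Qed.

Lemma num_pending_gt2 c j l p : c j != None -> c l != None -> c p != None ->
  j != l -> j != p -> l != p -> (2 < num_pending c)%N.
Proof.
move=> cj cl cp jl jp lp; rewrite /num_pending (cardD1 j) (cardD1 l) (cardD1 p) !inE.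
by rewrite cj cl cp (eq_sym l) jl (eq_sym p j) jp (eq_sym p l) lp.
Qed.

Lemma num_pending_others c i : c i != None ->
  #|[pred j | (j != i) && (c j != None)]| = (num_pending c).-1.
Proof.
move=> ci; rewrite /num_pending [in RHS](cardD1 i) inE ci add1n /=.
by apply: eq_card => j; rewrite !inE.
Qed.

Lemma num_pending_gt0 c i : c i != None -> (0 < num_pending c)%N.
Proof. by move=> ci; apply/card_gt0P; exists i. Qed.

Lemma num_pending_init : num_pending (@init_config n k) = n.
Proof. by rewrite /num_pending -[RHS]card_ord; apply: eq_card. Qed.

End Departures.

Lemma prodr_bool (R : numDomainType) (I : finType) (P b : pred I) :
  \prod_(j | P j) (b j)%:R = [forall j, P j ==> b j]%:R :> R.
Proof.
have [/forallP allb | /forallPn [j]] := boolP [forall j, P j ==> b j].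
  by rewrite big1 // => j Pj; rewrite (implyP (allb j) Pj).
by rewrite negb_imply => /andP [Pj /negbTE bj]; rewrite (bigD1 j) //= bj mul0r.
Qed.

Lemma eq_sum_support (R : ringType) (I : finType) (w F G : I -> R) :
  (forall x, w x != 0 -> F x = G x) -> \sum_x w x * F x = \sum_x w x * G x.
Proof.
move=> FG; apply: eq_bigr => x _.
by have [->|/FG ->] := eqVneq (w x) 0; rewrite ?mul0r.
Qed.

Section TwoChannels.
Variable n : nat.
Implicit Types (c : config n 2) (a : {ffun 'I_n -> action 2}).

Lemma two_successes_silence c a j l p : succeeds c a j -> succeeds c a l -> j != l ->
  c p != None -> p != j -> p != l -> a p = idle.
Proof.
move=> sj sl jl cp pj pl; apply/eqP/negP => ap.
have lj : a l != a j by apply: succeeds_alone sj _ (succeeds_pending sl); rewrite eq_sym.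
have := succeeds_alone sj pj cp; have := succeeds_alone sl pl cp.
move: (succeeds_transmits sj) (succeeds_transmits sl) ap lj.
move: (a j) (a l) (a p) => x y z.
by case: x => [[|[|[|?]]] ?]; case: y => [[|[|[|?]]] ?]; case: z => [[|[|[|?]]] ?].
Qed.

Lemma card_succeeds_le1 c a :
  (2 < #|[pred j | (c j != None) && (a j != idle)]|)%N ->
  (#|[pred j | succeeds c a j]| <= 1)%N.
Proof.
set A := [pred j | _ && _] => three.
rewrite leqNgt; apply/card_gt1P => -[j [l [sj sl jl]]].
have /card_gt0P [p] : (0 < #|[predD1 [predD1 A & j] & l]|)%N.
  rewrite lt0n; apply/eqP => none; move: three.
  by rewrite (cardD1 j) (cardD1 l) none addn0; case: (j \in _); case: (l \in _).
rewrite !inE => /and3P [pl pj /andP [cp /negP]]; apply.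
by apply/eqP; exact: two_successes_silence sj sl jl cp pj pl.
Qed.

End TwoChannels.

Section SlotDistribution.
Context {R : realType} {n : nat}.
Implicit Types (c : config n 2) (a : {ffun 'I_n -> action 2}) (T : pred 'I_n).

Definition idle_dist : {ffun action 2 -> R} := [ffun y => (y == idle)%:R].

(* A slot in which the pending players in [T] follow [f2] and the other
   pending players stay idle. *)
Definition slot_weight c T j (y : action 2) : R :=
  if (c j != None) && T j then (y != idle)%:R / 2 else (y == idle)%:R.

Definition num_transmitters c T : nat := #|[pred j | (c j != None) && T j]|.

Lemma joint_weight_slot P c T a :
  (forall j h, c j = Some h -> P j h = if T j then f2 R h else idle_dist) ->
  joint_weight P c a = \prod_j slot_weight c T j (a j).
Proof.
move=> cP; apply: eq_bigr => j _; rewrite /slot_weight.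
case cj: (c j) => [h|] //=; rewrite (cP j h cj).
by case: (T j); rewrite !ffunE //; case: (a j == idle); rewrite ?mul0r ?mul1r.
Qed.

Lemma sum_slot_weight c T :
  \sum_(a : {ffun 'I_n -> action 2}) \prod_j slot_weight c T j (a j) = 1.
Proof.
rewrite -(bigA_distr_bigA (slot_weight c T)) /=; apply: big1 => j _.
by rewrite /slot_weight; case: (_ && _); rewrite !big_ord_recr big_ord0 /=; lra.
Qed.

Lemma slot_weight_support c T a : \prod_j slot_weight c T j (a j) != 0 ->
  forall j, if (c j != None) && T j then a j != idle else a j == idle.
Proof.
move/prodf_neq0 => nz j; have := nz j isT; rewrite /slot_weight.
by case: (_ && _); case: (a j == idle); rewrite /= ?mul0r ?eqxx.
Qed.

(* [succeeds c a j] splits over the channel [x] used by [j] into a product of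
   per-player indicators, which makes the slot sum factorize. *)
Definition alone_on c j (x : action 2) l (y : action 2) : R :=
  if l == j then ((y == x) && (x != idle))%:R else ((c l == None) || (y != x))%:R.

Lemma succeeds_alone_on c a j : c j != None ->
  (succeeds c a j)%:R = \sum_x \prod_l alone_on c j x l (a l).
Proof.
move=> cj; rewrite (bigD1 (a j)) //= [X in _ + X]big1 ?addr0; last first.
  by move=> x xa; rewrite (bigD1 j) //= /alone_on eqxx eq_sym (negbTE xa) mul0r.
rewrite (bigD1 j) //= /alone_on !eqxx /=.
rewrite (eq_bigr (fun l => ((c l != None) ==> (a l != a j))%:R)); last first.
  by move=> l /negbTE ->; case: (c l).
by rewrite prodr_bool -natrM mulnb /succeeds cj.
Qed.

Lemma sum_slot_alone_on c T j x l : c j != None -> T j -> x != idle ->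
  \sum_y slot_weight c T l y * alone_on c j x l y =
  if (c l != None) && T l then 2^-1 else 1.
Proof.
move=> cj Tj; case: x => [[|[|[|x]]] x_lt] x_nidle //.
all: rewrite /slot_weight /alone_on; case: (l =P j) => [->|_].
all: rewrite ?cj ?Tj /=; try case: (c l) => [h|] /=; try case: (T l) => /=.
all: by rewrite !big_ord_recr big_ord0 /=; lra.
Qed.

Lemma prob_succeeds c T j : c j != None -> T j ->
  \sum_(a : {ffun 'I_n -> action 2})
     (\prod_l slot_weight c T l (a l)) * (succeeds c a j)%:R =
  2 * 2^-1 ^+ num_transmitters c T.
Proof.
move=> cj Tj.
rewrite (eq_bigr (fun a : {ffun 'I_n -> action 2} =>
    \sum_x \prod_l (slot_weight c T l (a l) * alone_on c j x l (a l)))); last first.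
  move=> a _; rewrite (succeeds_alone_on a cj) mulr_sumr.
  by apply: eq_bigr => x _; rewrite big_split.
rewrite exchange_big /=.
under eq_bigr => x _ do
  rewrite -(bigA_distr_bigA (fun l y => slot_weight c T l y * alone_on c j x l y)) /=.
rewrite big_ord_recl (bigD1 j) //= big1 ?mul0r ?add0r; last first.
  by move=> y _; rewrite /alone_on eqxx andbF mulr0.
under eq_bigr => x _ do rewrite (eq_bigr _ (fun l _ => sum_slot_alone_on l cj Tj _)) //.
by rewrite -big_mkcond /= prodr_const sumr_const card_ord mulr_natl.
Qed.

Lemma prob_others_succeed c T i : (forall j, j != i -> c j != None -> T j) ->
  \sum_(a : {ffun 'I_n -> action 2})
     (\prod_l slot_weight c T l (a l)) * \sum_(j | j != i) (succeeds c a j)%:R =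
  #|[pred j | (j != i) && (c j != None)]|%:R * (2 * 2^-1 ^+ num_transmitters c T).
Proof.
move=> T_others; under eq_bigr => a _ do rewrite mulr_sumr.
rewrite exchange_big /= -sumr_const big_mkcondr /= mulr_suml; apply: eq_bigr => j ji.
have [cj|/negbTE cj] := boolP (c j != None); first by rewrite mul1r prob_succeeds ?T_others.
rewrite mul0r big1 // => a _.
suff -> : succeeds c a j = false by rewrite mulr0.
by apply: contraFF _ cj; exact: succeeds_pending.
Qed.

End SlotDistribution.

Section F2Latency.
Context {R : realType} {n : nat}.
Implicit Types (c : config n 2) (a : {ffun 'I_n -> action 2}).

(* Expected remaining latency of a pending player when [m] players are
   pending and all of them use [f2]. *)
Definition f2_latency (m : nat) : R := if m == 1%N then 1 else 2 ^+ m / m%:R.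

(* Zero for [m <= 2]: when [m = 2], one player fails only if both do. *)
Definition latency_drop (m : nat) : R :=
  if (2 < m)%N then f2_latency m - f2_latency m.-1 else 0.

Definition f2_potential (i : 'I_n) c : R :=
  if c i != None then f2_latency (num_pending c) else 0.

(* First-step analysis: each of the [m] pending players succeeds with
   probability [2 * 2^-1 ^+ m], and for [m > 2] at most one of them does. *)
Lemma f2_latency_recursion m : (0 < m)%N ->
  2 * 2^-1 ^+ m * (f2_latency m + m.-1%:R * latency_drop m) = 1 :> R.
Proof.
case: m => [|[|[|m]]] // _; rewrite /latency_drop /f2_latency /=; try by field.
rewrite exprVn (exprS _ m.+2).
have two_m : (2:R) ^+ m.+2 != 0 by rewrite expf_neq0.
by field; rewrite two_m -!natrD !pnatr_eq0 !addn_eq0.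
Qed.

(* The saving of idling in the first slot while the [m.-1] others transmit. *)
Lemma f2_latency_idle_gain m : (4 < m)%N ->
  1 < (f2_latency m - f2_latency m.-1) * (m.-1%:R * (2 * 2^-1 ^+ m.-1)) :> R.
Proof.
case: m => [|m] // m_gt3; have m_neq0 : (m != 0)%N by case: m m_gt3.
rewrite /f2_latency /= eqSS (negbTE m_neq0) ifN; last by case: m m_gt3 m_neq0 => [|[]].
rewrite exprVn (exprS _ m).
have two_m : (2:R) ^+ m != 0 by rewrite expf_neq0.
have m_gt0 : (0:R) < m%:R by rewrite ltr0n lt0n.
have -> : (2 * 2 ^+ m / m.+1%:R - 2 ^+ m / m%:R) * (m%:R * (2 * (2 ^+ m)^-1)) =
          (2 * m%:R - 2) / m.+1%:R :> R.
  rewrite -addn1 natrD; field.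
  by rewrite addrC natr1 pnatr_eq0 (gt_eqF m_gt0) expf_neq0 // paddr_eq0 ?ler01 // oner_eq0.
rewrite ltr_pdivlMr ?ltr0n // mul1r -addn1 natrD.
have : (4:R) <= m%:R by rewrite (ler_nat R 4 m).
lra.
Qed.

Lemma sum_succeeds_others c a i : ~~ succeeds c a i ->
  \sum_(j | j != i) (succeeds c a j)%:R = #|[pred j | succeeds c a j]|%:R :> R.
Proof.
move=> si; rewrite -sumr_const [LHS]big_mkcond [RHS]big_mkcond /=.
apply: eq_bigr => j _; rewrite inE.
by case: (eqVneq j i) => [->|_]; [rewrite (negbTE si) | case: succeeds].
Qed.

Lemma f2_potential_next_fail c a i : c i != None -> ~~ succeeds c a i ->
  (#|[pred j | succeeds c a j]| <= 1)%N ->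
  f2_potential i (next_config c a) =
  f2_latency (num_pending c) - (f2_latency (num_pending c) - f2_latency (num_pending c).-1)
    * \sum_(j | j != i) (succeeds c a j)%:R.
Proof.
move=> ci si le1; rewrite /f2_potential next_config_pending ci si num_pending_next.
rewrite sum_succeeds_others //.
case: #|[pred j | succeeds c a j]| le1 => [|[|]] // _; first by rewrite subn0 mulr0 subr0.
by rewrite subn1 mulr1 opprB addrC subrK.
Qed.

Lemma f2_potential_next c a i : c i != None -> (forall j, c j != None -> a j != idle) ->
  f2_potential i (next_config c a) =
  f2_latency (num_pending c) - f2_latency (num_pending c) * (succeeds c a i)%:R
  - latency_drop (num_pending c) * \sum_(j | j != i) (succeeds c a j)%:R.
Proof.
move=> ci all_transmit; set m := num_pending c.
have transmitters : #|[pred j | (c j != None) && (a j != idle)]| = m.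
  by apply: eq_card => j; rewrite !inE andb_idr //; exact: all_transmit.
have [m_gt2|m_le2] := ltnP 2 m.
  have le1 : (#|[pred j | succeeds c a j]| <= 1)%N.
    by rewrite card_succeeds_le1 ?transmitters.
  have [si|si] := boolP (succeeds c a i); last first.
    by rewrite f2_potential_next_fail // /latency_drop m_gt2 mulr0 subr0.
  rewrite /f2_potential next_config_pending ci si mulr1 subrr sub0r big1 ?mulr0 ?oppr0 //.
  move=> j ji; apply/eqP; rewrite pnatr_eq0 eqb0; apply: contraTN le1 => sj.
  by rewrite -ltnNge; apply/card_gt1P; exists i, j; rewrite !inE si sj eq_sym.
have drop0 : latency_drop m = 0 by rewrite /latency_drop ltnNge m_le2.
rewrite drop0 mul0r subr0.
have [si|si] := boolP (succeeds c a i).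
  by rewrite /f2_potential next_config_pending ci si mulr1 subrr.
have [l /and3P [li cl /eqP ali]] := collision_witness ci (all_transmit i ci) si.
have nobody j : ~~ succeeds c a j.
  apply/negP => sj; have ij : i != j by apply: contraNneq si => ->.
  have lj : l != j by apply: contraNneq _ (succeeds_alone sj ij ci) => <-; rewrite ali.
  have il : i != l by rewrite eq_sym.
  by move: m_le2; rewrite leqNgt (num_pending_gt2 ci cl (succeeds_pending sj) il ij lj).
have no_success : #|[pred j | succeeds c a j]| = 0%N.
  by apply: eq_card0 => j; rewrite inE (negbTE (nobody j)).
rewrite f2_potential_next_fail ?no_success // big1 ?mulr0 ?subr0 // => j _.
by rewrite (negbTE (nobody j)).
Qed.

Lemma f2_latency_ge0 m : 0 <= f2_latency m.
Proof.
rewrite /f2_latency; case: (m == 1)%N; first exact: ler01.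
by rewrite divr_ge0 ?ler0n // exprn_ge0.
Qed.

Lemma f2_potential_ge0 i c : 0 <= f2_potential i c.
Proof. by rewrite /f2_potential; case: (_ != _); rewrite ?f2_latency_ge0. Qed.

Lemma f2_potential_le i c : f2_potential i c <= 2 ^+ n * pending i c.
Proof.
rewrite /f2_potential /pending.
have [ci|_] := boolP (c i != None) => /=; last by rewrite mulr0n mulr0.
have m_le : (num_pending c <= n)%N by rewrite -[X in (_ <= X)%N]card_ord max_card.
have m_gt0 := num_pending_gt0 ci.
rewrite mulr1n mulr1 /f2_latency; case: (_ == 1)%N; first by apply: exprn_ege1; lra.
apply: le_trans (_ : 2 ^+ num_pending c <= _); last by rewrite ler_eXn2l //; lra.
by rewrite ler_pdivrMr ?ltr0n // ler_peMr ?exprn_ge0 // ler1n.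
Qed.

End F2Latency.

Lemma valid_f2 (R : realType) : valid_protocol (f2 R).
Proof.
move=> h; split => [a|]; rewrite /f2 ?ffunE; first by case: (_ == _); rewrite ?invr_ge0 ?ler0n.
by rewrite !big_ord_recr big_ord0 /= !ffunE /=; lra.
Qed.

Lemma valid_f2_idle_first (R : realType) : valid_protocol (f2_idle_first R).
Proof.
case=> [|x h]; last exact: valid_f2.
split => [a|]; first by rewrite ffunE ler0n.
by rewrite !big_ord_recr big_ord0 /= !ffunE /=; lra.
Qed.

Section LatencyPotentials.
Context {R : realType} {n : nat} (i : 'I_n).
Implicit Types (c : config n 2) (a : {ffun 'I_n -> action 2}).

Let all_f2 : profile R n 2 := all_use (f2 R).
Let idle_first : profile R n 2 := deviate (f2 R) (f2_idle_first R) i.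

Lemma f2_latency_potential : latency_potential all_f2 i (f2_potential i).
Proof.
move=> c; rewrite /transfer.
under eq_bigr => a _ do rewrite (@joint_weight_slot _ _ _ c xpredT a (fun _ _ _ => erefl)).
have [ci|/negbTE ci] := boolP (c i != None); last first.
  rewrite /f2_potential /pending ci subr0 big1 // => a _.
  by rewrite next_config_pending ci mulr0.
have transmitters : num_transmitters c xpredT = num_pending c.
  by apply: eq_card => j; rewrite !inE andbT.
set m := num_pending c.
rewrite (eq_sum_support (w := fun a => \prod_j slot_weight c xpredT j (a j))
  (G := fun a => f2_latency m - f2_latency m * (succeeds c a i)%:R
                 - latency_drop m * \sum_(j | j != i) (succeeds c a j)%:R)); last first.
  move=> a /slot_weight_support supp; rewrite (f2_potential_next ci) // => j cj.
  by have := supp j; rewrite cj.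
under eq_bigr => a _ do
  rewrite !mulrBr mulrCA [_ * (latency_drop m * _)]mulrCA [_ * f2_latency m]mulrC.
rewrite !sumrB -!mulr_sumr sum_slot_weight prob_succeeds // prob_others_succeed //.
rewrite num_pending_others // transmitters /f2_potential /pending ci -/m.
have := f2_latency_recursion (R := R) (num_pending_gt0 ci).
by move=> rec; rewrite /= mulr1n -[in RHS]rec; ring.
Qed.

(* Before [i]'s first slot the deviation pays that slot and then continues
   from the configuration reached with [i] idle. *)
Definition idle_first_potential c : R :=
  if c i == Some [::] then 1 + transfer idle_first (f2_potential i) c
  else f2_potential i c.

Lemma transfer_idle_first_potential P c :
  transfer P idle_first_potential c = transfer P (f2_potential i) c.
Proof.
by apply: eq_bigr => a _; rewrite /idle_first_potential (negbTE (next_config_nonempty _ _ _)).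
Qed.

Lemma idle_first_latency_potential : latency_potential idle_first i idle_first_potential.
Proof.
move=> c; rewrite transfer_idle_first_potential /idle_first_potential.
have [ci|ci] := eqVneq (c i) (Some [::]); first by rewrite /pending ci /= addrC addKr.
rewrite -f2_latency_potential; apply: eq_bigr => a _; congr (_ * _).
apply: eq_bigr => j _; rewrite /idle_first /deviate /all_f2 /all_use.
by case: eqP => [->|//]; case: (c i) ci => [[|x h]|].
Qed.

Lemma transfer_idle_first_init : (3 < n)%N ->
  transfer idle_first (f2_potential i) (@init_config n 2) =
  f2_latency n - (f2_latency n - f2_latency n.-1) * (n.-1%:R * (2 * 2^-1 ^+ n.-1)).
Proof.
move=> n_gt3; set c := @init_config n 2; set T : pred 'I_n := fun j => j != i.
have others : #|[pred j | (j != i) && (c j != None)]| = n.-1.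
  by rewrite num_pending_others // num_pending_init.
have transmitters : num_transmitters c T = n.-1.
  by rewrite -others; apply: eq_card => j; rewrite !inE andbC.
rewrite /transfer.
under eq_bigr => a _.
  rewrite (@joint_weight_slot _ _ _ c T a); last first.
    by move=> j h [<-]; rewrite /idle_first /deviate /T; case: eqP.
  over.
rewrite (eq_sum_support (w := fun a => \prod_j slot_weight c T j (a j))
  (G := fun a => f2_latency n - (f2_latency n - f2_latency n.-1)
                 * \sum_(j | j != i) (succeeds c a j)%:R)); last first.
  move=> a /slot_weight_support supp.
  have ai : a i == idle by have := supp i; rewrite /T eqxx andbF.
  have si : ~~ succeeds c a i by apply: contraTN ai => /succeeds_transmits.
  rewrite f2_potential_next_fail //; first by rewrite /c num_pending_init.
  apply: card_succeeds_le1.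
  have sub : [pred j | (j != i) && (c j != None)] \subset
             [pred j | (c j != None) && (a j != idle)].
    apply/fintype.subsetP => j; rewrite !inE => /andP [ji cj].
    by have := supp j; rewrite cj /T ji.
  by apply: leq_trans (subset_leq_card sub); rewrite others; case: n n_gt3 => [|[|[|[]]]].
under eq_bigr => a _ do rewrite mulrBr mulrCA.
rewrite sumrB -mulr_suml -mulr_sumr sum_slot_weight mul1r prob_others_succeed //.
by rewrite others transmitters.
Qed.

Lemma idle_first_potential_ge0 c : 0 <= idle_first_potential c.
Proof.
rewrite /idle_first_potential; case: (_ == _); last exact: f2_potential_ge0.
rewrite addr_ge0 // sumr_ge0 // => a _; rewrite mulr_ge0 ?f2_potential_ge0 //.
exact/joint_weight_ge0/valid_nonneg_deviate/valid_f2_idle_first/valid_f2.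
Qed.

Lemma exp_latency_f2 : exp_latency all_f2 i = (f2_latency n)%:E.
Proof.
have two_n_ge0 : (0 : R) <= 2 ^+ n by rewrite exprn_ge0.
rewrite (exp_latency_potential (valid_nonneg_all_use (valid_f2 R)) f2_latency_potential
  two_n_ge0 (@f2_potential_ge0 R n i) (@f2_potential_le R n i)).
by rewrite /f2_potential /= num_pending_init.
Qed.

Lemma exp_latency_idle_first_le : (3 < n)%N -> (exp_latency idle_first i <=
  (1 + f2_latency n - (f2_latency n - f2_latency n.-1) * (n.-1%:R * (2 * 2^-1 ^+ n.-1)))%:E)%E.
Proof.
move=> n_gt3; have idle_first_ge0 := valid_nonneg_deviate i (valid_f2 R) (valid_f2_idle_first R).
apply: le_trans (exp_latency_le_potential idle_first_ge0 idle_first_latency_potential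
  idle_first_potential_ge0) _.
by rewrite /idle_first_potential eqxx transfer_idle_first_init // addrA.
Qed.

End LatencyPotentials.

Theorem corollary2 (R : realType) (n : nat) (hn : (5 <= n)%N) :
  ~ @equilibrium R n 2 (f2 R) /\
  forall i : 'I_n,
    (exp_latency (deviate (f2 R) (f2_idle_first R) i) i
       < exp_latency (@all_use R n 2 (f2 R)) i)%E.
Proof.
have idle_first_better i : (exp_latency (deviate (f2 R) (f2_idle_first R) i) i
    < exp_latency (@all_use R n 2 (f2 R)) i)%E.
  rewrite exp_latency_f2; apply: le_lt_trans (exp_latency_idle_first_le i (ltnW hn)) _.
  by rewrite lte_fin; have := f2_latency_idle_gain (R := R) hn; lra.
split=> // f2_equilibrium.
have i : 'I_n := Ordinal (leq_trans (isT : (0 < 5)%N) hn).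
have := f2_equilibrium i [::] _ (valid_f2_idle_first R).
rewrite hist_prob_nil ltr01 switch_at0 !cond_latency_nil => /(_ isT).
by rewrite leNgt idle_first_better.
Qed.
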